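(* Let $\mathbf{x}=(\mathbf{x}_1,\dots,\mathbf{x}_n)\in\mathbb{R}^{3n}$ be a ligand pose whose atom positions are not all collinear, and let $\boldsymbol{\theta}=(\theta_1,\dots,\theta_m)$ be fixed. For $t\in\mathbb{R}$ put $t\boldsymbol{\theta}=(t\theta_1,\dots,t\theta_m)$ and $\mathbf{x}(t):=A_{\mathrm{tor}}(t\boldsymbol{\theta},\mathbf{x})$, and assume $\mathbf{x}(0)=\mathbf{x}$ and that $t\mapsto\mathbf{x}(t)$ is differentiable at $t=0$ (with the aligning rotation and translation differentiable in $t$ at $t=0$). Then the linear and angular momentum of the motion vanish at $t=0$: $$\frac{d}{dt}\bar{\mathbf{x}}(t)\Big|_{t=0}=0\qquad\text{and}\qquad \sum_{i=1}^n(\mathbf{x}_i-\bar{\mathbf{x}})\times\frac{d}{dt}\mathbf{x}_i(t)\Big|_{t=0}=0,$$ where $\bar{\mathbf{x}}(t)=\frac1n\sum_i\mathbf{x}_i(t)$ and $\bar{\mathbf{x}}=\bar{\mathbf{x}}(0)$.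
   Context: A ligand pose is $\mathbf{x}\in\mathbb{R}^{3n}$, with $\mathbf{x}_i\in\mathbb{R}^3$ the position of atom $i$. $\mathrm{RMSD}(\mathbf{x},\mathbf{x}')=\big(\frac1n\sum_i\|\mathbf{x}_i-\mathbf{x}'_i\|^2\big)^{1/2}$. For $g\in SE(3)$ (proper rigid motion) $g\mathbf{x}'$ applies $g$ to every atom. Define $\mathrm{RMSDAlign}(\mathbf{x},\mathbf{x}')=\operatorname{argmin}_{\mathbf{x}^\dagger\in\{g\mathbf{x}'\mid g\in SE(3)\}}\mathrm{RMSD}(\mathbf{x},\mathbf{x}^\dagger)$. The ligand has $m$ rotatable bonds $(a_k,b_k)$; for each $k$ and angle $\theta$, $B_{k,\theta}:\mathbb{R}^{3n}\to\mathbb{R}^{3n}$ is a torsion update by $\theta$ around bond $k$ (rotation of the atoms on one side of the bond about the bond axis by $\theta$), with $B_{k,0}$ the identity and $B_{k,\theta}$ smooth in $\theta$. The torsion operation is $A_{\mathrm{tor}}(\boldsymbol{\theta},\mathbf{x})=\mathrm{RMSDAlign}\big(\mathbf{x},(B_{1,\theta_1}\circ\cdots\circ B_{m,\theta_m})(\mathbf{x})\big)$ for $\boldsymbol{\theta}\in SO(2)^m$. *)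

From HB Require Import structures.
From mathcomp Require Import all_boot all_order all_algebra.
From mathcomp Require Import all_classical all_reals all_analysis.
Set Implicit Arguments. Unset Strict Implicit. Unset Printing Implicit Defensive.
Import Order.TTheory GRing.Theory Num.Theory.
Import numFieldNormedType.Exports.
Local Open Scope ring_scope.

(* A pose of n atoms is an n x 3 real matrix; row i is the position x_i. *)
Section Defs.
Variable R : realType.

Definition dot3 (u v : 'rV[R]_3) : R := \sum_(j < 3) u 0 j * v 0 j.
Definition norm3 (u : 'rV[R]_3) : R := Num.sqrt (dot3 u u).

Definition cross (u v : 'rV[R]_3) : 'rV[R]_3 :=
  \row_(j < 3) [:: u 0 1 * v 0 2 - u 0 2 * v 0 1;
                  u 0 2 * v 0 0 - u 0 0 * v 0 2;
                  u 0 0 * v 0 1 - u 0 1 * v 0 0]`_j.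

Definition centroid n (x : 'M[R]_(n, 3)) : 'rV[R]_3 :=
  n%:R^-1 *: \sum_(i < n) row i x.

Definition collinear n (x : 'M[R]_(n, 3)) : Prop :=
  exists (c d : 'rV[R]_3), forall i : 'I_n, exists s : R, row i x = c + s *: d.

Definition RMSD n (x x' : 'M[R]_(n, 3)) : R :=
  Num.sqrt (n%:R^-1 * \sum_(i < n) \sum_(j < 3) (x i j - x' i j) ^+ 2).

Definition is_rot (Q : 'M[R]_3) : Prop := Q *m Q^T = 1%:M /\ \det Q = 1.

(* proper rigid motion g = (Q, p) applied atomwise: x_i |-> x_i Q + p
   (row-vector convention; Q ranges over all of SO(3)) *)
Definition rigid n (Q : 'M[R]_3) (p : 'rV[R]_3) (y : 'M[R]_(n, 3)) : 'M[R]_(n, 3) :=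
  y *m Q + \matrix_(i < n, j < 3) p 0 j.

Definition is_RMSDAlign n (x x' xd : 'M[R]_(n, 3)) : Prop :=
  (exists Q p, is_rot Q /\ xd = rigid Q p x') /\
  (forall Q p, is_rot Q -> RMSD x xd <= RMSD x (rigid Q p x')).

(* Rotation of the point v by angle th about the axis through c with
   direction w (Rodrigues' formula); identity if the axis is degenerate. *)
Definition axis_rot (c w : 'rV[R]_3) (th : R) (v : 'rV[R]_3) : 'rV[R]_3 :=
  if w == 0 then v else
  let u := (norm3 w)^-1 *: w in
  c + (cos th *: (v - c) + sin th *: cross u (v - c)
       + ((1 - cos th) * dot3 u (v - c)) *: u).

(* torsion update B_{k,th}: bond k = (a k, b k); the atoms of side k (the side
   containing b k) are rotated by th about the bond axis a k -> b k. *)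
Definition torsion n m (a b : 'I_m -> 'I_n) (side : 'I_m -> {set 'I_n})
    (k : 'I_m) (th : R) (y : 'M[R]_(n, 3)) : 'M[R]_(n, 3) :=
  \matrix_(i < n)
    (if i \in side k
     then axis_rot (row (b k) y) (row (b k) y - row (a k) y) th (row i y)
     else row i y).

Definition Btor n m (a b : 'I_m -> 'I_n) (side : 'I_m -> {set 'I_n})
    (th : 'I_m -> R) (y : 'M[R]_(n, 3)) : 'M[R]_(n, 3) :=
  foldr (fun k acc => torsion a b side k (th k) acc) y (enum 'I_m).

End Defs.

From HB Require Import structures.
From mathcomp Require Import all_boot all_order all_algebra.
From mathcomp Require Import all_classical all_reals all_analysis.
From mathcomp Require Import ring lra.
Import Order.TTheory GRing.Theory Num.Theory.
Import numFieldNormedType.Exports.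
Set Implicit Arguments. Unset Strict Implicit. Unset Printing Implicit Defensive.
Local Open Scope ring_scope.

(** Each x(t) minimises the RMSD to x over the rigid orbit of B(tθ)(x), so it
    satisfies the first-order conditions of that minimisation at every t.
    Translating x(t) by p changes the squared deviation by
    n|p|² - 2⟨p, Σ_i (x_i - x_i(t))⟩, so minimality forces x(t) to have the
    centroid of x.  Rotating x(t) by an angle φ in a coordinate plane changes
    it by 2((1 - cos φ) A - sin φ C), which is nonnegative for all φ only if
    C = 0; the three such C are the components of Σ_i x_i × x_i(t).  Hence
    for every t the centroid of x(t) is x̄ and Σ_i (x_i - x̄) × x_i(t) = 0;
    both are linear in x(t), so they survive differentiation at t = 0. *)

Lemma sum_ord3 (V : nmodType) (F : 'I_3 -> V) : \sum_(j < 3) F j = F 0 + F 1 + F 2.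
Proof. rewrite !big_ord_recr big_ord0 /= add0r; congr (F _ + F _ + F _); exact/val_inj. Qed.

Lemma ord3P (k : 'I_3) : [\/ k = 0, k = 1 | k = 2].
Proof.
by case: k => [[|[|[|?]]] ?] //; [constructor 1 | constructor 2 | constructor 3]; exact/val_inj.
Qed.

Lemma det_mx33 (R : comNzRingType) (f : nat -> nat -> R) :
  \det (\matrix_(i < 3, j < 3) f i j) =
  f 0 0 * (f 1 1 * f 2 2 - f 1 2 * f 2 1)
  - f 0 1 * (f 1 0 * f 2 2 - f 1 2 * f 2 0)
  + f 0 2 * (f 1 0 * f 2 1 - f 1 1 * f 2 0).
Proof.
rewrite (expand_det_row _ 0) sum_ord3 /cofactor /=.
rewrite !(expand_det_row _ 0) !big_ord_recr !big_ord0 /cofactor /= !det_mx11 !mxE /=.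
rewrite /bump !modn_small //= ?addn0 ?add0n ?addn1; ring.
Qed.

Lemma nonneg_quadratic_eq0 (R : realFieldType) (A C : R) :
  (forall u, 0 <= u * (u * A - C)) -> C = 0.
Proof.
move=> H; pose k := (A ^+ 2 + 1)^-1.
have k_gt0 : 0 < k by rewrite invr_gt0; have := sqr_ge0 A; lra.
have kA_lt1 : k * A < 1.
  by rewrite -ltr_pdivlMl // invrK; have := sqr_ge0 (A - 1); nra.
have := H (C * k).
rewrite (_ : _ * _ = C ^+ 2 * k * (k * A - 1)); last by ring.
move=> h; have : C ^+ 2 * k <= 0 by nra.
rewrite pmulr_lle0 // => C2_le0.
by apply/eqP; rewrite -sqrf_eq0 eq_le C2_le0 sqr_ge0.
Qed.

Lemma unit_circle_nonneg_eq0 (R : realFieldType) (A C : R) :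
  (forall c s, c ^+ 2 + s ^+ 2 = 1 -> 0 <= (1 - c) * A - s * C) -> C = 0.
Proof.
(* near (1, 0) the constraint is linear in s but quadratic in 1 - c *)
move=> H; apply: (@nonneg_quadratic_eq0 _ A) => u.
have d_gt0 : 0 < 1 + u ^+ 2 by have := sqr_ge0 u; lra.
have d_neq0 : 1 + u ^+ 2 != 0 by rewrite gt_eqF.
have /H : ((1 - u ^+ 2) / (1 + u ^+ 2)) ^+ 2 + (2 * u / (1 + u ^+ 2)) ^+ 2 = 1.
  by field.
rewrite (_ : _ - _ = 2 * (u * (u * A - C)) / (1 + u ^+ 2)); last by field.
by rewrite pmulr_lge0 ?invr_gt0 // pmulr_rge0.
Qed.

Section CrossProduct.
Variable R : realType.
Implicit Types u v w : 'rV[R]_3.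

Fact cross_is_linear u : linear (cross u).
Proof. by move=> a v w; apply/rowP => -[[|[|[|k]]] hk] //; rewrite !mxE /=; ring. Qed.

HB.instance Definition _ u :=
  GRing.isLinear.Build R 'rV[R]_3 'rV[R]_3 *:%R (cross u) (cross_is_linear u).

Lemma crossvv u : cross u u = 0.
Proof. by apply/rowP => -[[|[|[|k]]] hk] //; rewrite !mxE /=; ring. Qed.

Lemma crossBl u w v : cross (u - w) v = cross u v - cross w v.
Proof. by apply/rowP => -[[|[|[|k]]] hk] //; rewrite !mxE /=; ring. Qed.

Lemma crossZl a u v : cross (a *: u) v = a *: cross u v.
Proof. by apply/rowP => -[[|[|[|k]]] hk] //; rewrite !mxE /=; ring. Qed.

Lemma sum_crossBl n (u v : 'I_n -> 'rV[R]_3) w :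
  \sum_i cross (u i - w) (v i) = \sum_i cross (u i) (v i) - cross w (\sum_i v i).
Proof. by rewrite linear_sum -sumrB; apply: eq_bigr => i _; exact: crossBl. Qed.

Lemma cross_entry_delta u v k :
  cross u v 0 k = \sum_(j < 3) cross u (delta_mx 0 j) 0 k * v 0 j.
Proof.
rewrite {1}(row_sum_delta v) linear_sum summxE.
by apply: eq_bigr => j _; rewrite linearZ mxE mulrC.
Qed.

End CrossProduct.

Section DeriveLincomb.
Variables (R : realType) (V : normedModType R).

Lemma derive_mx_lincomb m k (M : V -> 'M[R]_(m, k)) (c : 'I_m -> 'I_k -> R) t v :
  derivable M t v ->
  'D_v (fun s => \sum_i \sum_j c i j * M s i j) t =
  \sum_i \sum_j c i j * 'D_v M t i j.
Proof.
move=> /derivable_mxP dM; rewrite derive_mx; last exact/derivable_mxP.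
pose h i j := c i j \*: (fun s => M s i j).
have dh i j : derivable (h i j) t v by exact: derivableZ.
have -> : (fun s => \sum_i \sum_j c i j * M s i j) = \sum_i \sum_j h i j.
  by apply/funext => s; rewrite !fct_sumE; apply: eq_bigr => i _; rewrite fct_sumE.
rewrite derive_sum => [|i]; last exact: derivable_sum.
apply: eq_bigr => i _; rewrite derive_sum //.
by apply: eq_bigr => j _; rewrite deriveZ // mxE.
Qed.

Lemma derive_sum_cross_eq0 n (u : 'I_n -> 'rV[R]_3) (F : V -> 'M[R]_(n, 3)) t v :
  derivable F t v -> (forall s, \sum_i cross (u i) (row i (F s)) = 0) ->
  \sum_i cross (u i) (row i ('D_v F t)) = 0.
Proof.
move=> dF F0.
have entry M k : (\sum_i cross (u i) (row i M)) 0 k =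
    \sum_i \sum_j cross (u i) (delta_mx 0 j) 0 k * M i j.
  rewrite summxE; apply: eq_bigr => i _; rewrite cross_entry_delta.
  by apply: eq_bigr => j _; rewrite [row i M 0 j]mxE.
apply/rowP => k; rewrite [RHS]mxE entry -derive_mx_lincomb //.
under eq_fun do rewrite -entry F0 mxE.
exact: derive_cst.
Qed.

End DeriveLincomb.



Definition plane_rot_entry {R : nzRingType} (p q : nat) (c s : R) (i j : nat) : R :=
  if i == j then (if (i == p) || (i == q) then c else 1)
  else if (i == p) && (j == q) then s
  else if (i == q) && (j == p) then - s else 0.

Definition plane_rot {R : nzRingType} (p q : nat) (c s : R) : 'M[R]_3 :=
  \matrix_(i < 3, j < 3) plane_rot_entry p q c s i j.

Lemma plane_rot_is_rot {R : realType} (p q : 'I_3) (c s : R) :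
  p != q -> c ^+ 2 + s ^+ 2 = 1 -> is_rot (plane_rot p q c s).
Proof.
move=> pq cs; split.
  apply/matrixP => i j; rewrite !mxE sum_ord3 !mxE /plane_rot_entry.
  case: p q pq => [[|[|[|?]]] ?] [[|[|[|?]]] ?] //= _;
    by case: i j => [[|[|[|?]]] ?] [[|[|[|?]]] ?] //=; first [ring | apply: etrans cs; ring].
rewrite det_mx33 /plane_rot_entry.
by case: p q pq => [[|[|[|?]]] ?] [[|[|[|?]]] ?] //= _; apply: etrans cs; ring.
Qed.

Section RigidMotion.
Variables (R : realType) (n : nat).

Lemma rigid_comp Q p Q' p' (y : 'M[R]_(n, 3)) :
  rigid Q' p' (rigid Q p y) = rigid (Q *m Q') (p *m Q' + p') y.
Proof.
rewrite /rigid mulmxDl mulmxA -addrA; congr (_ + _); apply/matrixP => i j.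
by rewrite !mxE; congr (_ + _); apply: eq_bigr => k _; rewrite mxE.
Qed.

Lemma is_rot_mulmx (A B : 'M[R]_3) : is_rot A -> is_rot B -> is_rot (A *m B).
Proof.
move=> [AAt detA] [BBt detB]; split; last by rewrite det_mulmx detA detB mulr1.
by rewrite trmx_mul mulmxA -(mulmxA A) BBt mulmx1 AAt.
Qed.

Lemma is_rot1 : is_rot (1%:M : 'M[R]_3).
Proof. by split; [rewrite trmx1 mulmx1 | rewrite det1]. Qed.

End RigidMotion.

Section OptimalAlignment.
Variables (R : realType) (n : nat) (x : 'M[R]_(n, 3)).
Implicit Types y z : 'M[R]_(n, 3).

Definition sqdev y := \sum_i \sum_j (x i j - y i j) ^+ 2.

Lemma sqdev_ge0 y : 0 <= sqdev y.
Proof. by apply: sumr_ge0 => i _; apply: sumr_ge0 => j _; exact: sqr_ge0. Qed.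

Lemma RMSD_le_sqdev y z : RMSD x y <= RMSD x z -> sqdev y <= sqdev z.
Proof.
rewrite /RMSD ler_sqrt; last by rewrite mulr_ge0 ?invr_ge0 ?ler0n ?sqdev_ge0.
have [n0 _|n_gt0] := posnP n.
  by rewrite /sqdev !big1 // => i; move: (ltn_ord i); rewrite [in X in (_ < X)%N]n0.
by rewrite ler_pM2l // invr_gt0 ltr0n.
Qed.

Lemma RMSDAlign_sqdev_min y' y :
  is_RMSDAlign x y' y -> forall Q p, is_rot Q -> sqdev y <= sqdev (rigid Q p y).
Proof.
move=> [[Q0 [p0 [Q0rot ->]]] ymin] Q p Qrot.
by rewrite rigid_comp; apply/RMSD_le_sqdev/ymin/is_rot_mulmx.
Qed.

Lemma sqdev_translate y (p : 'rV[R]_3) :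
  sqdev (rigid 1%:M p y) =
  sqdev y + \sum_j (n%:R * p 0 j ^+ 2 - 2 * p 0 j * \sum_i (x i j - y i j)).
Proof.
rewrite /sqdev exchange_big [X in X + _]exchange_big -big_split /=.
apply: eq_bigr => j _; rewrite mulr_natl -[n in _ *+ n]card_ord -sumr_const.
rewrite mulr_sumr -sumrB -big_split /=.
by apply: eq_bigr => i _; rewrite /rigid mulmx1 !mxE; ring.
Qed.

Lemma sqdev_translate_min_sum_rows y :
  (forall p, sqdev y <= sqdev (rigid 1%:M p y)) -> \sum_i row i y = \sum_i row i x.
Proof.
move=> ymin; have [n0|n_gt0] := posnP n.
  by rewrite !big1 // => i; move: (ltn_ord i); rewrite [in X in (_ < X)%N]n0.
pose d j := \sum_i (x i j - y i j).
have gain j : n%:R * (n%:R^-1 * d j) ^+ 2 - 2 * (n%:R^-1 * d j) * d j =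
    - (n%:R^-1 * d j ^+ 2).
  by field; rewrite pnatr_eq0 -lt0n.
have := ymin (\row_j (n%:R^-1 * d j)); rewrite sqdev_translate lerDl.
under eq_bigr do rewrite mxE gain.
rewrite sumrN oppr_ge0 -mulr_sumr pmulr_rle0 ?invr_gt0 ?ltr0n // => d2_le0.
have d2_eq0 : \sum_j d j ^+ 2 = 0.
  by apply/eqP; rewrite eq_le d2_le0 sumr_ge0 // => j _; exact: sqr_ge0.
apply/rowP => j; rewrite !summxE; apply/eqP; rewrite eq_sym -subr_eq0 -sumrB.
under eq_bigr do rewrite !mxE.
by rewrite -sqrf_eq0 (psumr_eq0P _ d2_eq0) // => k _; exact: sqr_ge0.
Qed.

Lemma sqdev_plane_rot y (p q : 'I_3) c s : p != q -> c ^+ 2 + s ^+ 2 = 1 ->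
  sqdev (rigid (plane_rot p q c s) 0 y) =
  sqdev y + 2 * ((1 - c) * \sum_i (x i p * y i p + x i q * y i q)
                 - s * \sum_i (x i q * y i p - x i p * y i q)).
Proof.
move=> pq cs; rewrite /sqdev !mulr_sumr -sumrB mulr_sumr -big_split /=.
apply: eq_bigr => i _; apply/eqP; rewrite -subr_eq0; apply/eqP.
transitivity ((c ^+ 2 + s ^+ 2 - 1) * (y i p ^+ 2 + y i q ^+ 2)); last first.
  by rewrite cs subrr mul0r.
rewrite /rigid !sum_ord3 !mxE !sum_ord3 !mxE /plane_rot_entry.
by case: (ord3P p) (ord3P q) pq => -> [] -> //= _; ring.
Qed.

Lemma sqdev_rot_min_sum_cross y :
  (forall Q, is_rot Q -> sqdev y <= sqdev (rigid Q 0 y)) ->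
  \sum_i cross (row i x) (row i y) = 0.
Proof.
move=> ymin.
have skew (p q : 'I_3) : p != q -> \sum_i (x i q * y i p - x i p * y i q) = 0.
  move=> pq.
  apply: (@unit_circle_nonneg_eq0 _ (\sum_i (x i p * y i p + x i q * y i q))) => c s cs.
  have := ymin _ (plane_rot_is_rot pq cs).
  by rewrite sqdev_plane_rot // lerDl pmulr_rge0.
apply/rowP => k; rewrite summxE [RHS]mxE.
case: (ord3P k) => ->; rewrite -[RHS]oppr0;
  [rewrite -[in RHS](skew 1 2) | rewrite -[in RHS](skew 2 0)
  | rewrite -[in RHS](skew 0 1)] => //;
  by rewrite -sumrN; apply: eq_bigr => i _; rewrite !mxE /=; ring.
Qed.

Lemma RMSDAlign_sum_rows y' y :
  is_RMSDAlign x y' y -> \sum_i row i y = \sum_i row i x.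
Proof.
move/RMSDAlign_sqdev_min => ymin.
by apply: sqdev_translate_min_sum_rows => p; exact: ymin _ p (is_rot1 R).
Qed.

Lemma RMSDAlign_centroid y' y : is_RMSDAlign x y' y -> centroid y = centroid x.
Proof. by rewrite /centroid => /RMSDAlign_sum_rows ->. Qed.

Lemma RMSDAlign_sum_cross y' y :
  is_RMSDAlign x y' y -> \sum_i cross (row i x - centroid x) (row i y) = 0.
Proof.
move=> align; rewrite sum_crossBl (RMSDAlign_sum_rows align) /centroid.
rewrite crossZl crossvv scaler0 subr0.
by apply: sqdev_rot_min_sum_cross => Q; exact: RMSDAlign_sqdev_min align Q 0.
Qed.

End OptimalAlignment.

Theorem proposition1 (R : realType) (n m : nat)
    (a b : 'I_m -> 'I_n) (side : 'I_m -> {set 'I_n})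
    (hab : forall k, a k != b k)
    (hside : forall k, b k \in side k /\ a k \notin side k)
    (x : 'M[R]_(n, 3)) (hnc : ~ collinear x)
    (theta : 'I_m -> R)
    (xt : R -> 'M[R]_(n, 3)) (Q : R -> 'M[R]_3) (p : R -> 'rV[R]_3)
    (hQ : forall t, is_rot (Q t))
    (hxt : forall t,
        xt t = rigid (Q t) (p t) (Btor a b side (fun k => t * theta k) x))
    (halign : forall t,
        is_RMSDAlign x (Btor a b side (fun k => t * theta k) x) (xt t))
    (h0 : xt 0 = x)
    (hdx : derivable xt 0 1) (hdQ : derivable Q 0 1) (hdp : derivable p 0 1) :
  'D_1 (fun t => centroid (xt t)) 0 = 0 /\
  \sum_(i < n) cross (row i x - centroid x) (row i ('D_1 xt 0)) = 0.
Proof.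
have centroid_xt t : centroid (xt t) = centroid x := RMSDAlign_centroid (halign t).
split.
  have -> : (fun t => centroid (xt t)) = cst (centroid x) by apply/funext => t.
  exact: derive_cst.
by apply: derive_sum_cross_eq0 hdx _ => t; exact: RMSDAlign_sum_cross (halign t).
Qed.
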